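(* (1) Suppose $\psi(x)\ge c_0x$ on $[0,1]$ for some $c_0>0$. If $(x_N,x_T)\in\mathbb C^2$ with $|x_N|\le\min(1,c_0)|x_T|$, then for every $\delta\in(0,\delta_0]$, \[ |x_T|\le\kappa_{G_\psi}(p_\delta;(x_N,x_T))\le\max\left(1,\frac{|x_N|}{|x_T|}\cdot\frac{1}{1-\delta}\right)|x_T|. \] (2) Suppose $\frac{\psi(x)}{x}$ is a strictly increasing function on $(0,1)$, and let $\delta^*$ be the unique solution of $1-\delta=\frac{\delta}{\psi^{-1}(\delta)}$. If $0<\delta\le\delta^*$ and $|x_N|\le\min\left(1,\frac{\delta}{\psi^{-1}(\delta)}\right)|x_T|$, then $\kappa_{G_\psi}(p_\delta;(x_N,x_T))=|x_T|$.
   Context: $\mathbb D$ is the unit disc in $\mathbb C$. $\psi:[0,1]\to[0,\infty)$ is continuous with $\psi(0)=0$, $\psi(1)>0$, and $G_\psi:=\{z\in\mathbb D^2:\Re z_1<\psi(|z_2|)\}$. For $\delta\in(0,1)$, $p_\delta:=(-\delta,0)$. Standing assumption: $\delta\in(0,\delta_0]$ for a fixed $\delta_0<1$; $\psi^{-1}$ is the inverse of $\psi$ (defined where used). The Kobayashi–Royden metric of a domain $\Omega\subset\mathbb C^d$ is $\kappa_\Omega(z;X)=\inf\{\lambda^{-1}:\lambda>0,\ \exists\varphi:\mathbb D\to\Omega \text{ holomorphic},\ \varphi(0)=z,\ \varphi'(0)=\lambda X\}$. *)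

From Stdlib Require Import Reals Lra.
From Coquelicot Require Import Coquelicot.
Open Scope R_scope.

Definition in_disc (z : C) : Prop := Cmod z < 1.

Definition G_psi (psi : R -> R) (z : C * C) : Prop :=
  in_disc (fst z) /\ in_disc (snd z) /\ Re (fst z) < psi (Cmod (snd z)).

Definition holo_disc (phi : C -> C * C) : Prop :=
  forall z : C, in_disc z ->
    @ex_derive C_AbsRing C_NormedModule (fun w => fst (phi w)) z /\
    @ex_derive C_AbsRing C_NormedModule (fun w => snd (phi w)) z.

(* Kobayashi--Royden metric of a domain Omega in C^2 at z in direction X:
   inf { 1/lam : lam > 0, exists phi : D -> Omega holomorphic,
         phi (RtoC 0) = z, phi'(0) = lam X }  (inf of the empty set is +oo). *)
Definition kobayashi (Omega : C * C -> Prop) (z X : C * C) : Rbar :=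
  Glb_Rbar (fun r : R => exists lam : R, 0 < lam /\ r = / lam /\
    exists phi : C -> C * C,
      holo_disc phi /\
      (forall w, in_disc w -> Omega (phi w)) /\
      phi (RtoC 0) = z /\
      @is_derive C_AbsRing C_NormedModule (fun w => fst (phi w)) (RtoC 0)
         (Cmult (RtoC lam) (fst X)) /\
      @is_derive C_AbsRing C_NormedModule (fun w => snd (phi w)) (RtoC 0)
         (Cmult (RtoC lam) (snd X))).

Definition psi_admissible (psi : R -> R) : Prop :=
  (forall x, 0 <= x <= 1 -> 0 <= psi x) /\
  (forall x, 0 <= x <= 1 -> forall eps, 0 < eps -> exists d, 0 < d /\
      forall y, 0 <= y <= 1 -> Rabs (y - x) < d -> Rabs (psi y - psi x) < eps) /\
  psi 0 = 0 /\ 0 < psi 1.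

Definition p_delta (delta : R) : C * C := (RtoC (- delta), RtoC 0).

(* Lower bound: the second component of a competing disc maps the unit disc into itself
   and fixes 0, so by the Schwarz lemma [lam * |xT| <= 1].  Coquelicot provides no Cauchy
   theory, so the Schwarz lemma is derived from Goursat's theorem for rectangles (proved by
   bisection), its variant with a removable point, the resulting Cauchy estimate
   [|f'(0)| <= 4] on the square of half-side [1/2], and iteration of [f].
   Upper bounds: the linear disc [w |-> p_delta + (xN, xT) w / B] lies in [G_psi] when [B]
   is the claimed bound.  Its first coordinate stays in the disc since [|xN| <= (1 - delta) B],
   and its real part stays below [psi] thanks to the linear minorant [c0 x] in (1), and to the
   monotonicity of [psi(x)/x] together with [delta <= dstar] in (2). *)

From Stdlib Require Import Reals Lra Lia Arith.
From Coquelicot Require Import Coquelicot.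
Open Scope R_scope.

(** * Integrals and derivatives of complex functions *)

Definition CRInt (f : R -> C) (a b : R) : C := @RInt C_R_CompleteNormedModule f a b.
Definition ex_CRInt (f : R -> C) (a b : R) : Prop := @ex_RInt C_R_CompleteNormedModule f a b.
Definition ex_Cderive (g : C -> C) (z : C) : Prop := @ex_derive C_AbsRing C_NormedModule g z.

Lemma norm_C_Cmod (a : C_R_CompleteNormedModule) : norm a = Cmod a.
Proof.
  destruct a as [r s]. unfold norm; simpl. unfold prod_norm, Cmod; simpl.
  change (norm r) with (Rabs r). change (norm s) with (Rabs s).
  rewrite !Rmult_1_r, <- !Rabs_mult, !Rabs_right; try reflexivity; nra.
Qed.

Lemma Cmod_CRInt_le (f : R -> C) a b M : a <= b -> ex_CRInt f a b ->
  (forall x, a <= x <= b -> Cmod (f x) <= M) -> Cmod (CRInt f a b) <= M * (b - a).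
Proof.
  intros Hab Hf HM. rewrite <- norm_C_Cmod.
  replace (M * (b - a)) with (scal (b - a) M) by (unfold scal; simpl; unfold mult; simpl; ring).
  apply (norm_RInt_le f (fun _ => M) a b (CRInt f a b) (scal (b - a) M)); auto.
  - intros x Hx. rewrite norm_C_Cmod. auto.
  - exact (@RInt_correct C_R_CompleteNormedModule f a b Hf).
  - apply (@is_RInt_const R_NormedModule).
Qed.

Lemma CRInt_Chasles f a b c : ex_CRInt f a b -> ex_CRInt f b c ->
  (CRInt f a b + CRInt f b c)%C = CRInt f a c.
Proof. intros H1 H2. exact (@RInt_Chasles C_R_CompleteNormedModule f a b c H1 H2). Qed.

Lemma CRInt_plus f g a b : ex_CRInt f a b -> ex_CRInt g a b ->
  CRInt (fun x => f x + g x)%C a b = (CRInt f a b + CRInt g a b)%C.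
Proof. intros H1 H2. exact (@RInt_plus C_R_CompleteNormedModule f g a b H1 H2). Qed.

Lemma CRInt_ext f g a b : (forall x, Rmin a b <= x <= Rmax a b -> f x = g x) ->
  CRInt f a b = CRInt g a b.
Proof. intros H. apply (@RInt_ext C_R_CompleteNormedModule). intros x Hx. apply H; lra. Qed.

Lemma CRInt_fst f a b : ex_CRInt f a b -> fst (CRInt f a b) = RInt (fun x => fst (f x)) a b.
Proof.
  intros H. symmetry. apply is_RInt_unique.
  apply (@is_RInt_fct_extend_fst R_NormedModule R_NormedModule).
  exact (@RInt_correct C_R_CompleteNormedModule f a b H).
Qed.

Lemma CRInt_snd f a b : ex_CRInt f a b -> snd (CRInt f a b) = RInt (fun x => snd (f x)) a b.
Proof.
  intros H. symmetry. apply is_RInt_unique.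
  apply (@is_RInt_fct_extend_snd R_NormedModule R_NormedModule).
  exact (@RInt_correct C_R_CompleteNormedModule f a b H).
Qed.

Lemma CRInt_scal (k : C) f a b : ex_CRInt f a b ->
  CRInt (fun x => k * f x)%C a b = (k * CRInt f a b)%C.
Proof.
  intros H. pose proof (@RInt_correct C_R_CompleteNormedModule f a b H) as Hl.
  change (is_RInt f a b (CRInt f a b)) in Hl.
  unfold CRInt at 1. apply (@is_RInt_unique C_R_CompleteNormedModule).
  revert Hl. generalize (CRInt f a b). intros [l1 l2] Hl.
  pose proof (@is_RInt_fct_extend_fst R_NormedModule R_NormedModule f a b _ Hl) as H1.
  pose proof (@is_RInt_fct_extend_snd R_NormedModule R_NormedModule f a b _ Hl) as H2.
  destruct k as [k1 k2]. simpl in H1, H2.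
  change ((k1, k2) * (l1, l2))%C with (((k1 * l1 - k2 * l2)%R, (k1 * l2 + k2 * l1)%R) : C).
  apply (@is_RInt_fct_extend_pair R_NormedModule R_NormedModule).
  - apply (is_RInt_ext (fun t => minus (scal k1 (fst (f t))) (scal k2 (snd (f t))))).
    { intros x _. reflexivity. }
    apply (@is_RInt_minus R_NormedModule); apply (@is_RInt_scal R_NormedModule); assumption.
  - apply (is_RInt_ext (fun t => plus (scal k1 (snd (f t))) (scal k2 (fst (f t))))).
    { intros x _. reflexivity. }
    apply (@is_RInt_plus R_NormedModule); apply (@is_RInt_scal R_NormedModule); assumption.
Qed.

Lemma is_RInt_affine p q a b :
  is_RInt (fun x => p + q * x) a b (p * (b - a) + q * (b * b - a * a) / 2).
Proof.
  replace (p * (b - a) + q * (b * b - a * a) / 2) with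
    (minus ((fun x => p * x + q * (x * x) / 2) b) ((fun x => p * x + q * (x * x) / 2) a))
    by (unfold minus, plus, opp; simpl; field).
  apply (@is_RInt_derive R_CompleteNormedModule (fun x => p * x + q * (x * x) / 2)).
  - intros x _. auto_derive; auto. field.
  - intros x _. apply continuity_pt_filterlim. apply derivable_continuous_pt.
    apply derivable_pt_plus. apply derivable_pt_const. apply derivable_pt_scal. apply derivable_pt_id.
Qed.

Lemma CRInt_affine p q r s a b :
  CRInt (fun x => ((p + q * x)%R, (r + s * x)%R)) a b =
  ((p * (b - a) + q * (b * b - a * a) / 2)%R, (r * (b - a) + s * (b * b - a * a) / 2)%R).
Proof.
  apply (@is_RInt_unique C_R_CompleteNormedModule).
  apply (@is_RInt_fct_extend_pair R_NormedModule R_NormedModule); apply is_RInt_affine.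
Qed.

Lemma RInt_ge_length (f : R -> R) a b : a <= b -> ex_RInt f a b ->
  (forall x, a <= x <= b -> 1 <= f x) -> b - a <= RInt f a b.
Proof.
  intros Hab Hf H. replace (b - a) with (RInt (fun _ => 1) a b).
  - apply RInt_le; auto. apply ex_RInt_const. intros; apply H; lra.
  - rewrite RInt_const. unfold scal; simpl; unfold mult; simpl. ring.
Qed.

Lemma is_derive_C_approx (g : C -> C) z l : @is_derive C_AbsRing C_NormedModule g z l ->
  forall eps, 0 < eps -> exists d, 0 < d /\ forall w, Cmod (w - z) < d ->
    Cmod (g w - g z - l * (w - z)) <= eps * Cmod (w - z).
Proof.
  intros [_ H] eps Heps.
  destruct (H z (fun P HP => HP) (mkposreal eps Heps)) as [e He].
  exists e. split; [apply cond_pos|]. intros w Hw.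
  rewrite (Cmult_comm l). exact (He w Hw).
Qed.

Lemma is_derive_C_of_approx (g : C -> C) z l :
  (forall eps, 0 < eps -> exists d, 0 < d /\ forall w, Cmod (w - z) < d ->
    Cmod (g w - g z - l * (w - z)) <= eps * Cmod (w - z)) ->
  @is_derive C_AbsRing C_NormedModule g z l.
Proof.
  intros H. split; [apply is_linear_scal_l|].
  intros x Hx.
  apply (@is_filter_lim_locally_unique C_AbsRing (AbsRing_NormedModule C_AbsRing)) in Hx. subst x.
  intros eps. destruct (H eps (cond_pos eps)) as [d [Hd Hw]].
  exists (mkposreal _ Hd). intros y Hy. simpl. rewrite (Cmult_comm _ l). exact (Hw y Hy).
Qed.

Lemma is_derive_C_exact (g : C -> C) z l :
  (forall w, (g w - g z - l * (w - z))%C = 0%C) -> @is_derive C_AbsRing C_NormedModule g z l.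
Proof.
  intros H. apply is_derive_C_of_approx. intros eps He. exists 1. split; [lra|]. intros w _.
  rewrite H, Cmod_0. apply Rmult_le_pos; [lra | apply Cmod_ge_0].
Qed.

(* Coquelicot's chain and product rules are stated over [AbsRing_NormedModule C_AbsRing],
   which carries the same norm as [C_NormedModule] but is not convertible to it. *)
Lemma is_derive_C_AbsRing f (z l : C) : @is_derive C_AbsRing C_NormedModule f z l ->
  @is_derive C_AbsRing (AbsRing_NormedModule C_AbsRing) f z l.
Proof.
  intros [[A B [M HM]] H2]. split; [split; [exact A | exact B | exists M; exact HM]|].
  intros x Hx eps. exact (H2 x Hx eps).
Qed.

Lemma is_derive_AbsRing_C f (z l : C) : @is_derive C_AbsRing (AbsRing_NormedModule C_AbsRing) f z l ->
  @is_derive C_AbsRing C_NormedModule f z l.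
Proof.
  intros [[A B [M HM]] H2]. split; [split; [exact A | exact B | exists M; exact HM]|].
  intros x Hx eps. exact (H2 x Hx eps).
Qed.

Lemma is_derive_Cinv (z : C) : z <> 0 ->
  @is_derive C_AbsRing C_NormedModule (fun w => / w)%C z (- (/ z * / z))%C.
Proof.
  intros Hz. apply is_derive_C_of_approx. intros eps Heps.
  assert (Hmz : 0 < Cmod z) by (apply Cmod_gt_0; auto).
  assert (Hz3 : 0 < Cmod z ^ 3) by (apply pow_lt; auto).
  exists (Rmin (Cmod z / 2) (eps * Cmod z ^ 3 / 2)). split.
  { apply Rmin_glb_lt; [lra|]. apply Rmult_lt_0_compat; [|lra]. nra. }
  intros w Hw.
  assert (H1 : Cmod (w - z) < Cmod z / 2) by (eapply Rlt_le_trans; [exact Hw | apply Rmin_l]).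
  assert (H2 : Cmod (w - z) < eps * Cmod z ^ 3 / 2) by (eapply Rlt_le_trans; [exact Hw | apply Rmin_r]).
  assert (Hwm : Cmod z / 2 <= Cmod w).
  { assert (Cmod z <= Cmod w + Cmod (z - w)).
    { replace z with (w + (z - w))%C at 1 by ring. apply Cmod_triangle. }
    replace (z - w)%C with (- (w - z))%C in H by ring. rewrite Cmod_opp in H. lra. }
  assert (Hw0 : w <> 0) by (intro E; subst w; rewrite Cmod_0 in Hwm; lra).
  replace (/ w - / z - - (/ z * / z) * (w - z))%C with ((w - z) * (w - z) * / (w * z * z))%C
    by (field; auto).
  rewrite !Cmod_mult, Cmod_inv, !Cmod_mult by (repeat apply Cmult_neq_0; auto).
  set (r := Cmod (w - z)) in *. assert (0 <= r) by apply Cmod_ge_0.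
  assert (Hp : 0 < Cmod w * Cmod z * Cmod z) by (apply Rmult_lt_0_compat; [apply Rmult_lt_0_compat|]; lra).
  rewrite Rmult_assoc, (Rmult_comm eps r). apply Rmult_le_compat_l; auto.
  apply (Rmult_le_reg_r (Cmod w * Cmod z * Cmod z)); auto.
  rewrite Rmult_assoc, Rinv_l, Rmult_1_r by lra.
  assert (eps * (Cmod z / 2 * Cmod z * Cmod z) <= eps * (Cmod w * Cmod z * Cmod z))
    by (apply Rmult_le_compat_l; [lra|]; apply Rmult_le_compat_r; [lra|]; apply Rmult_le_compat_r; lra).
  simpl in H2. nra.
Qed.

Lemma ex_Cderive_const (k z : C) : ex_Cderive (fun _ => k) z.
Proof. exists (RtoC 0). apply is_derive_C_exact. intros w. ring. Qed.

Lemma ex_Cderive_id (z : C) : ex_Cderive (fun w => w) z.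
Proof. exists (RtoC 1). apply is_derive_C_exact. intros w. ring. Qed.

Lemma ex_Cderive_plus f g (z : C) : ex_Cderive f z -> ex_Cderive g z ->
  ex_Cderive (fun w => f w + g w)%C z.
Proof. intros [l1 H1] [l2 H2]. exists (plus l1 l2). exact (is_derive_plus f g z l1 l2 H1 H2). Qed.

Lemma ex_Cderive_minus f g (z : C) : ex_Cderive f z -> ex_Cderive g z ->
  ex_Cderive (fun w => f w - g w)%C z.
Proof. intros [l1 H1] [l2 H2]. exists (minus l1 l2). exact (is_derive_minus f g z l1 l2 H1 H2). Qed.

Lemma ex_Cderive_mult f g (z : C) : ex_Cderive f z -> ex_Cderive g z ->
  ex_Cderive (fun w => f w * g w)%C z.
Proof.
  intros [l1 H1] [l2 H2]. eexists. apply is_derive_AbsRing_C.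
  apply (@is_derive_mult C_AbsRing f g z l1 l2 (is_derive_C_AbsRing _ _ _ H1) (is_derive_C_AbsRing _ _ _ H2)).
  intros; apply Cmult_comm.
Qed.

Lemma ex_Cderive_scal (k : C) f (z : C) : ex_Cderive f z -> ex_Cderive (fun w => k * f w)%C z.
Proof. intros H. apply ex_Cderive_mult; [apply ex_Cderive_const | exact H]. Qed.

Lemma ex_Cderive_affine (k L z : C) : ex_Cderive (fun w => k + L * w)%C z.
Proof. apply ex_Cderive_plus; [apply ex_Cderive_const | apply ex_Cderive_scal, ex_Cderive_id]. Qed.

Lemma ex_Cderive_inv (z : C) : z <> 0 -> ex_Cderive (fun w => / w)%C z.
Proof. intros H. eexists. apply is_derive_Cinv; auto. Qed.

Lemma ex_Cderive_comp f g (z : C) : ex_Cderive g z -> ex_Cderive f (g z) ->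
  ex_Cderive (fun w => f (g w)) z.
Proof.
  intros [l1 H1] [l2 H2]. eexists.
  exact (@is_derive_comp C_AbsRing C_NormedModule f g z l2 l1 H2 (is_derive_C_AbsRing _ _ _ H1)).
Qed.

Lemma continuous_horizontal (c x : R) :
  @continuous R_UniformSpace (AbsRing_UniformSpace C_AbsRing) (fun t : R => ((t, c) : C)) x.
Proof.
  apply filterlim_locally. intros eps. exists eps. intros y Hy.
  change (Cmod ((y - x)%R, (c - c)%R) < eps). replace (c - c) with 0 by ring.
  change (Cmod (RtoC (y - x)) < eps). rewrite Cmod_R. exact Hy.
Qed.

Lemma continuous_vertical (c y : R) :
  @continuous R_UniformSpace (AbsRing_UniformSpace C_AbsRing) (fun t : R => ((c, t) : C)) y.
Proof.
  apply filterlim_locally. intros eps. exists eps. intros x Hx.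
  change (Cmod ((c - c)%R, (x - y)%R) < eps). replace (c - c) with 0 by ring.
  unfold Cmod; simpl. replace (0 * (0 * 1) + (x - y) * ((x - y) * 1)) with ((x - y)²) by (unfold Rsqr; ring).
  rewrite sqrt_Rsqr_abs. exact Hx.
Qed.

Lemma ex_CRInt_horizontal g (c a b : R) : a <= b ->
  (forall x, a <= x <= b -> ex_Cderive g (x, c)) -> ex_CRInt (fun x => g (x, c)) a b.
Proof.
  intros Hab H. apply ex_RInt_continuous. intros z Hz.
  rewrite Rmin_left, Rmax_right in Hz by lra.
  apply (@continuous_comp R_UniformSpace (AbsRing_UniformSpace C_AbsRing) C_UniformSpace
    (fun t : R => ((t, c) : C)) g); [apply continuous_horizontal|].
  apply (@ex_derive_continuous C_AbsRing C_NormedModule). apply H; auto.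
Qed.

Lemma ex_CRInt_vertical g (c a b : R) : a <= b ->
  (forall y, a <= y <= b -> ex_Cderive g (c, y)) -> ex_CRInt (fun y => g (c, y)) a b.
Proof.
  intros Hab H. apply ex_RInt_continuous. intros z Hz.
  rewrite Rmin_left, Rmax_right in Hz by lra.
  apply (@continuous_comp R_UniformSpace (AbsRing_UniformSpace C_AbsRing) C_UniformSpace
    (fun t : R => ((c, t) : C)) g); [apply continuous_vertical|].
  apply (@ex_derive_continuous C_AbsRing C_NormedModule). apply H; auto.
Qed.

Lemma Cmod_le_Rabs_plus x y : Cmod (x, y) <= Rabs x + Rabs y.
Proof.
  unfold Cmod; simpl. pose proof (Rabs_pos x). pose proof (Rabs_pos y).
  rewrite <- (sqrt_Rsqr (Rabs x + Rabs y)) by lra.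
  apply sqrt_le_1_alt. unfold Rsqr.
  assert (x * x = Rabs x * Rabs x) by (rewrite <- Rabs_mult, Rabs_right; nra).
  assert (y * y = Rabs y * Rabs y) by (rewrite <- Rabs_mult, Rabs_right; nra).
  nra.
Qed.

Lemma Rabs_Re_le_Cmod x y : Rabs x <= Cmod (x, y).
Proof. unfold Cmod; simpl. rewrite <- sqrt_Rsqr_abs. apply sqrt_le_1_alt. unfold Rsqr. nra. Qed.

Lemma Rabs_Im_le_Cmod x y : Rabs y <= Cmod (x, y).
Proof. unfold Cmod; simpl. rewrite <- sqrt_Rsqr_abs. apply sqrt_le_1_alt. unfold Rsqr. nra. Qed.

Lemma Cmod_plus4_le (x y z w : C) : Cmod (x + y + (z + w)) <= Cmod x + Cmod y + Cmod z + Cmod w.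
Proof.
  eapply Rle_trans; [apply Cmod_triangle|].
  pose proof (Cmod_triangle x y). pose proof (Cmod_triangle z w). lra.
Qed.

(** * Integrals around rectangles and Goursat's theorem *)

Definition rect_integral (g : C -> C) (a b c d : R) : C :=
  (CRInt (fun x => g (x, c)) a b + Ci * CRInt (fun y => g (b, y)) c d
   - CRInt (fun x => g (x, d)) a b - Ci * CRInt (fun y => g (a, y)) c d)%C.

Definition on_rect_boundary (P : C -> Prop) (a b c d : R) : Prop :=
  (forall x, a <= x <= b -> P (x, c) /\ P (x, d)) /\
  (forall y, c <= y <= d -> P (a, y) /\ P (b, y)).

Definition holo_on_rect (g : C -> C) (a b c d : R) : Prop :=
  forall x y, a <= x <= b -> c <= y <= d -> ex_Cderive g (x, y).

Lemma holo_on_rect_sub g a b c d a' b' c' d' : holo_on_rect g a b c d ->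
  a <= a' -> b' <= b -> c <= c' -> d' <= d -> holo_on_rect g a' b' c' d'.
Proof. intros H ? ? ? ? x y ? ?. apply H; lra. Qed.

Lemma holo_on_rect_boundary g a b c d : a <= b -> c <= d ->
  holo_on_rect g a b c d -> on_rect_boundary (ex_Cderive g) a b c d.
Proof. intros Hab Hcd H. split; intros t Ht; split; apply H; lra. Qed.

Lemma ex_CRInt_rect_boundary g a b c d : a <= b -> c <= d ->
  on_rect_boundary (ex_Cderive g) a b c d ->
  ex_CRInt (fun x => g (x, c)) a b /\ ex_CRInt (fun x => g (x, d)) a b /\
  ex_CRInt (fun y => g (b, y)) c d /\ ex_CRInt (fun y => g (a, y)) c d.
Proof.
  intros Hab Hcd [Hh Hv].
  refine (conj _ (conj _ (conj _ _))).
  - apply ex_CRInt_horizontal; [exact Hab|]. intros t Ht. apply (Hh t Ht).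
  - apply ex_CRInt_horizontal; [exact Hab|]. intros t Ht. apply (Hh t Ht).
  - apply ex_CRInt_vertical; [exact Hcd|]. intros t Ht. apply (Hv t Ht).
  - apply ex_CRInt_vertical; [exact Hcd|]. intros t Ht. apply (Hv t Ht).
Qed.

Lemma rect_integral_ext g1 g2 a b c d : a <= b -> c <= d ->
  on_rect_boundary (fun z => g1 z = g2 z) a b c d ->
  rect_integral g1 a b c d = rect_integral g2 a b c d.
Proof.
  intros Hab Hcd [Hh Hv]. unfold rect_integral.
  rewrite (CRInt_ext (fun x => g1 (x, c)) (fun x => g2 (x, c))),
    (CRInt_ext (fun x => g1 (x, d)) (fun x => g2 (x, d))),
    (CRInt_ext (fun y => g1 (b, y)) (fun y => g2 (b, y))),
    (CRInt_ext (fun y => g1 (a, y)) (fun y => g2 (a, y))); [reflexivity|..];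
    intros t Ht; rewrite ?Rmin_left, ?Rmax_right in Ht by lra;
    first [apply (Hh t Ht) | apply (Hv t Ht)].
Qed.

Lemma rect_integral_lin g V (k : C) a b c d : a <= b -> c <= d ->
  on_rect_boundary (ex_Cderive g) a b c d -> on_rect_boundary (ex_Cderive V) a b c d ->
  rect_integral (fun z => g z + k * V z)%C a b c d = (rect_integral g a b c d + k * rect_integral V a b c d)%C.
Proof.
  intros Hab Hcd Hg HV.
  assert (HkV : on_rect_boundary (ex_Cderive (fun z => k * V z)%C) a b c d).
  { destruct HV as [Hh Hv].
    split; intros t Ht; [destruct (Hh t Ht) | destruct (Hv t Ht)]; split; apply ex_Cderive_scal; auto. }
  destruct (ex_CRInt_rect_boundary g a b c d Hab Hcd Hg) as (G1 & G2 & G3 & G4).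
  destruct (ex_CRInt_rect_boundary V a b c d Hab Hcd HV) as (V1 & V2 & V3 & V4).
  destruct (ex_CRInt_rect_boundary _ a b c d Hab Hcd HkV) as (W1 & W2 & W3 & W4).
  unfold rect_integral.
  rewrite (CRInt_plus _ _ a b G1 W1), (CRInt_plus _ _ a b G2 W2),
    (CRInt_plus _ _ c d G3 W3), (CRInt_plus _ _ c d G4 W4),
    (CRInt_scal k _ a b V1), (CRInt_scal k _ a b V2), (CRInt_scal k _ c d V3), (CRInt_scal k _ c d V4).
  ring.
Qed.

Lemma rect_integral_bound g a b c d M : a <= b -> c <= d ->
  on_rect_boundary (ex_Cderive g) a b c d -> on_rect_boundary (fun z => Cmod (g z) <= M) a b c d ->
  Cmod (rect_integral g a b c d) <= 2 * M * (b - a) + 2 * M * (d - c).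
Proof.
  intros Hab Hcd Hg [Hh Hv].
  destruct (ex_CRInt_rect_boundary g a b c d Hab Hcd Hg) as (J1 & J2 & J3 & J4).
  assert (E1 : Cmod (CRInt (fun x => g (x, c)) a b) <= M * (b - a))
    by (apply Cmod_CRInt_le; auto; intros; apply Hh; lra).
  assert (E2 : Cmod (CRInt (fun x => g (x, d)) a b) <= M * (b - a))
    by (apply Cmod_CRInt_le; auto; intros; apply Hh; lra).
  assert (E3 : Cmod (CRInt (fun y => g (b, y)) c d) <= M * (d - c))
    by (apply Cmod_CRInt_le; auto; intros; apply Hv; lra).
  assert (E4 : Cmod (CRInt (fun y => g (a, y)) c d) <= M * (d - c))
    by (apply Cmod_CRInt_le; auto; intros; apply Hv; lra).
  unfold rect_integral.
  set (I1 := CRInt (fun x => g (x, c)) a b) in *. set (I2 := CRInt (fun x => g (x, d)) a b) in *.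
  set (I3 := CRInt (fun y => g (b, y)) c d) in *. set (I4 := CRInt (fun y => g (a, y)) c d) in *.
  replace (I1 + Ci * I3 - I2 - Ci * I4)%C with (I1 + Ci * I3 + (- I2 + - (Ci * I4)))%C by ring.
  eapply Rle_trans; [apply Cmod_plus4_le|].
  rewrite !Cmod_opp, !Cmod_mult, Cmod_Ci. lra.
Qed.

Lemma rect_integral_affine (k L : C) a b c d : rect_integral (fun z => k + L * z)%C a b c d = 0%C.
Proof.
  destruct k as [k1 k2], L as [L1 L2]. unfold rect_integral.
  rewrite (CRInt_ext (fun x => (k1, k2) + (L1, L2) * (x, c))%C
             (fun x => ((k1 - L2 * c + L1 * x)%R, (k2 + L1 * c + L2 * x)%R))),
    (CRInt_ext (fun x => (k1, k2) + (L1, L2) * (x, d))%C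
             (fun x => ((k1 - L2 * d + L1 * x)%R, (k2 + L1 * d + L2 * x)%R))),
    (CRInt_ext (fun y => (k1, k2) + (L1, L2) * (b, y))%C
             (fun y => ((k1 + L1 * b + - L2 * y)%R, (k2 + L2 * b + L1 * y)%R))),
    (CRInt_ext (fun y => (k1, k2) + (L1, L2) * (a, y))%C
             (fun y => ((k1 + L1 * a + - L2 * y)%R, (k2 + L2 * a + L1 * y)%R)));
    try (intros; unfold Cplus, Cmult; simpl; f_equal; ring).
  rewrite !CRInt_affine. unfold Cminus, Cplus, Cmult, Copp, Ci; simpl.
  apply injective_projections; simpl; field.
Qed.

Lemma rect_integral_split_x g a m b c d :
  ex_CRInt (fun x => g (x, c)) a m -> ex_CRInt (fun x => g (x, c)) m b ->
  ex_CRInt (fun x => g (x, d)) a m -> ex_CRInt (fun x => g (x, d)) m b ->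
  rect_integral g a b c d = (rect_integral g a m c d + rect_integral g m b c d)%C.
Proof.
  intros J1 J2 J3 J4. unfold rect_integral.
  rewrite <- (CRInt_Chasles (fun x => g (x, c)) a m b), <- (CRInt_Chasles (fun x => g (x, d)) a m b) by auto.
  ring.
Qed.

Lemma rect_integral_split_y g a b c m d :
  ex_CRInt (fun y => g (b, y)) c m -> ex_CRInt (fun y => g (b, y)) m d ->
  ex_CRInt (fun y => g (a, y)) c m -> ex_CRInt (fun y => g (a, y)) m d ->
  rect_integral g a b c d = (rect_integral g a b c m + rect_integral g a b m d)%C.
Proof.
  intros J1 J2 J3 J4. unfold rect_integral.
  rewrite <- (CRInt_Chasles (fun y => g (b, y)) c m d), <- (CRInt_Chasles (fun y => g (a, y)) c m d) by auto.
  ring.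
Qed.

Lemma rect_integral_quarter g a b c d : a <= b -> c <= d -> holo_on_rect g a b c d ->
  let m := (a + b) / 2 in let n := (c + d) / 2 in
  rect_integral g a b c d =
    (rect_integral g a m c n + rect_integral g a m n d +
     (rect_integral g m b c n + rect_integral g m b n d))%C.
Proof.
  intros Hab Hcd H m n.
  assert (Hx : forall y u v, c <= y <= d -> a <= u -> u <= v -> v <= b -> ex_CRInt (fun x => g (x, y)) u v).
  { intros y u v Hy Hu Huv Hv. apply ex_CRInt_horizontal; [exact Huv|]. intros x Hx. apply H; lra. }
  assert (Hy : forall x u v, a <= x <= b -> c <= u -> u <= v -> v <= d -> ex_CRInt (fun y => g (x, y)) u v).
  { intros x u v Hx' Hu Huv Hv. apply ex_CRInt_vertical; [exact Huv|]. intros y Hy. apply H; lra. }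
  assert (Hm : a <= m <= b) by (unfold m; lra).
  assert (Hn : c <= n <= d) by (unfold n; lra).
  rewrite (rect_integral_split_x g a m b c d) by (apply Hx; lra).
  rewrite (rect_integral_split_y g a m c n d) by (apply Hy; lra).
  rewrite (rect_integral_split_y g m b c n d) by (apply Hy; lra).
  reflexivity.
Qed.

Lemma nested_intervals (u v : nat -> R) :
  (forall n, u n <= u (S n)) -> (forall n, v (S n) <= v n) -> (forall n, u n <= v n) ->
  exists x, forall n, u n <= x <= v n.
Proof.
  intros Hu Hv Huv.
  assert (Mu : forall m k, u m <= u (k + m)%nat)
    by (intros m k; induction k as [|k IH]; [simpl; lra | specialize (Hu (k + m)%nat); simpl; lra]).
  assert (Mv : forall m k, v (k + m)%nat <= v m)
    by (intros m k; induction k as [|k IH]; [simpl; lra | specialize (Hv (k + m)%nat); simpl; lra]).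
  assert (Huv' : forall m n, u m <= v n).
  { intros m n. destruct (le_lt_dec m n) as [L|L].
    - specialize (Mu m (n - m)%nat). replace (n - m + m)%nat with n in Mu by lia. specialize (Huv n). lra.
    - specialize (Mv n (m - n)%nat). replace (m - n + n)%nat with m in Mv by lia. specialize (Huv m). lra. }
  destruct (completeness (fun x => exists n, x = u n)) as [x [Xub Xlub]].
  - exists (v 0%nat). intros y [n ->]. apply Huv'.
  - exists (u 0%nat), 0%nat. reflexivity.
  - exists x. intros n. split.
    + apply Xub. exists n. reflexivity.
    + apply Xlub. intros y [m ->]. apply Huv'.
Qed.

Lemma pow_inv2_lt (K d : R) : 0 < d -> exists n : nat, K * (/ 2) ^ n < d.
Proof.
  intros Hd. destruct (INR_archimed d K Hd) as [n Hn]. exists n.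
  assert (P : INR n <= 2 ^ n).
  { clear. induction n as [|n IH]; [simpl; lra|]. rewrite S_INR. simpl.
    assert (1 <= 2 ^ n) by (apply pow_R1_Rle; lra). lra. }
  assert (0 < 2 ^ n) by (apply pow_lt; lra).
  rewrite pow_inv.
  apply (Rmult_lt_reg_r (2 ^ n)); auto. rewrite Rmult_assoc, Rinv_l by lra. nra.
Qed.

(* The affine part [g z0 + L (z - z0)] integrates to zero, leaving only the error term. *)
Lemma rect_integral_le_linear_approx g a b c d (z0 L : C) e :
  0 <= e -> a <= b -> c <= d -> holo_on_rect g a b c d ->
  a <= fst z0 <= b -> c <= snd z0 <= d ->
  (forall x y, a <= x <= b -> c <= y <= d ->
     Cmod (g (x, y) - g z0 - L * ((x, y) - z0)) <= e * Cmod ((x, y) - z0)) ->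
  Cmod (rect_integral g a b c d) <= 2 * e * ((b - a) + (d - c)) ^ 2.
Proof.
  intros He Hab Hcd Hg [Hx0 Hx1] [Hy0 Hy1] Happrox.
  set (K := (b - a) + (d - c)).
  set (V := fun z => (g z0 - L * z0 + L * z)%C).
  assert (HV : on_rect_boundary (ex_Cderive V) a b c d)
    by (split; intros; split; apply ex_Cderive_affine).
  assert (Hdist : forall x y, a <= x <= b -> c <= y <= d -> Cmod ((x, y) - z0) <= K).
  { intros x y Hx Hy. destruct z0 as [x0 y0]; simpl in *.
    change ((x, y) - (x0, y0))%C with (((x - x0)%R, (y - y0)%R) : C).
    eapply Rle_trans; [apply Cmod_le_Rabs_plus|].
    assert (Rabs (x - x0) <= b - a) by (apply Rabs_le; lra).
    assert (Rabs (y - y0) <= d - c) by (apply Rabs_le; lra). unfold K. lra. }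
  rewrite <- (Cplus_0_r (rect_integral g a b c d)), <- (Cmult_0_r (RtoC (-1))),
    <- (rect_integral_affine (g z0 - L * z0) L a b c d), <- rect_integral_lin
    by (auto; apply holo_on_rect_boundary; auto).
  replace (2 * e * K ^ 2) with (2 * (e * K) * (b - a) + 2 * (e * K) * (d - c)) by (unfold K; ring).
  apply rect_integral_bound; auto.
  - split; intros; split;
      (apply ex_Cderive_plus; [apply Hg; lra | apply ex_Cderive_scal, ex_Cderive_affine]).
  - assert (Hpt : forall x y, a <= x <= b -> c <= y <= d -> Cmod (g (x, y) + RtoC (-1) * V (x, y)) <= e * K).
    { intros x y Hx Hy. eapply Rle_trans; [|apply Rmult_le_compat_l; [exact He | apply (Hdist x y Hx Hy)]].
      eapply Rle_trans; [|apply (Happrox x y Hx Hy)]. right. unfold V. f_equal. ring. }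
    split; intros t Ht; split; apply Hpt; lra.
Qed.

Record rect := Rect { ra : R; rb : R; rc : R; rd : R }.

Section Goursat.
Variable g : C -> C.

Definition rect_int (r : rect) : C := rect_integral g (ra r) (rb r) (rc r) (rd r).

Definition larger_rect (r1 r2 : rect) : rect :=
  if Rle_dec (Cmod (rect_int r1)) (Cmod (rect_int r2)) then r2 else r1.

Definition largest_quarter (r : rect) : rect :=
  let m := (ra r + rb r) / 2 in let n := (rc r + rd r) / 2 in
  larger_rect (larger_rect (Rect (ra r) m (rc r) n) (Rect m (rb r) (rc r) n))
              (larger_rect (Rect (ra r) m n (rd r)) (Rect m (rb r) n (rd r))).

Lemma largest_quarter_sub r : ra r <= rb r -> rc r <= rd r ->
  let q := largest_quarter r in
  ra r <= ra q /\ rb q <= rb r /\ rb q - ra q = (rb r - ra r) / 2 /\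
  rc r <= rc q /\ rd q <= rd r /\ rd q - rc q = (rd r - rc r) / 2.
Proof. intros H1 H2 q. unfold q, largest_quarter, larger_rect. repeat destruct Rle_dec; simpl; lra. Qed.

Lemma largest_quarter_integral r : ra r <= rb r -> rc r <= rd r ->
  holo_on_rect g (ra r) (rb r) (rc r) (rd r) -> Cmod (rect_int r) <= 4 * Cmod (rect_int (largest_quarter r)).
Proof.
  intros H1 H2 H. unfold rect_int at 1. rewrite rect_integral_quarter by auto.
  eapply Rle_trans; [apply Cmod_plus4_le|].
  unfold largest_quarter, larger_rect; repeat destruct Rle_dec; unfold rect_int in *; simpl in *; lra.
Qed.

Variables a b c d : R.
Hypotheses (Hab : a <= b) (Hcd : c <= d) (Hg : holo_on_rect g a b c d).

Let rn (n : nat) : rect := Nat.iter n largest_quarter (Rect a b c d).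

Lemma largest_quarter_iter_inv n :
  a <= ra (rn n) /\ ra (rn n) <= rb (rn n) /\ rb (rn n) <= b /\
  c <= rc (rn n) /\ rc (rn n) <= rd (rn n) /\ rd (rn n) <= d /\
  rb (rn n) - ra (rn n) = (b - a) * (/ 2) ^ n /\ rd (rn n) - rc (rn n) = (d - c) * (/ 2) ^ n /\
  Cmod (rect_integral g a b c d) * (/ 4) ^ n <= Cmod (rect_int (rn n)).
Proof.
  induction n as [|n IH]; [simpl; unfold rect_int; simpl; lra|].
  change (rn (S n)) with (largest_quarter (rn n)).
  destruct IH as (I1 & I2 & I3 & I4 & I5 & I6 & I7 & I8 & I9).
  destruct (largest_quarter_sub (rn n) I2 I5) as (S1 & S2 & S3 & S4 & S5 & S6).
  pose proof (largest_quarter_integral (rn n) I2 I5 (holo_on_rect_sub g a b c d _ _ _ _ Hg I1 I3 I4 I6)).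
  simpl. rewrite S3, I7, S6, I8.
  replace (Cmod (rect_integral g a b c d) * (/ 4 * (/ 4) ^ n))
    with (Cmod (rect_integral g a b c d) * (/ 4) ^ n / 4) by field.
  repeat split; lra.
Qed.

Theorem goursat : rect_integral g a b c d = 0%C.
Proof.
  set (M := Cmod (rect_integral g a b c d)).
  destruct (Req_dec M 0) as [HM|HM]; [apply Cmod_eq_0; exact HM|].
  assert (HMp : 0 < M) by (pose proof (Cmod_ge_0 (rect_integral g a b c d)); unfold M in *; lra).
  exfalso.
  destruct (nested_intervals (fun n => ra (rn n)) (fun n => rb (rn n))) as [xs Hxs];
    try (intros n; destruct (largest_quarter_iter_inv n) as (I1 & I2 & I3 & I4 & I5 & _);
         destruct (largest_quarter_sub (rn n) I2 I5); change (rn (S n)) with (largest_quarter (rn n)); lra).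
  destruct (nested_intervals (fun n => rc (rn n)) (fun n => rd (rn n))) as [ys Hys];
    try (intros n; destruct (largest_quarter_iter_inv n) as (I1 & I2 & I3 & I4 & I5 & _);
         destruct (largest_quarter_sub (rn n) I2 I5) as (_ & _ & _ & ?); change (rn (S n)) with (largest_quarter (rn n)); lra).
  assert (Hz0 : a <= xs <= b /\ c <= ys <= d)
    by (specialize (Hxs 0%nat); specialize (Hys 0%nat); simpl in *; lra).
  destruct (Hg xs ys (proj1 Hz0) (proj2 Hz0)) as [L HL].
  set (K := (b - a) + (d - c)).
  set (e := M / (4 * K ^ 2 + 1)).
  assert (He : 0 < e) by (unfold e; apply Rdiv_lt_0_compat; [lra | pose proof (pow2_ge_0 K); lra]).
  destruct (is_derive_C_approx g (xs, ys) L HL e He) as [dl [Hdl HD]].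
  destruct (pow_inv2_lt K dl Hdl) as [n Hn].
  destruct (largest_quarter_iter_inv n) as (I1 & I2 & I3 & I4 & I5 & I6 & I7 & I8 & I9).
  set (t := (/ 2) ^ n) in *.
  assert (Ht : 0 < t) by (unfold t; apply pow_lt; lra).
  assert (Bd : Cmod (rect_int (rn n)) <= 2 * e * (K * t) ^ 2).
  { replace (K * t) with ((rb (rn n) - ra (rn n)) + (rd (rn n) - rc (rn n))) by (rewrite I7, I8; unfold K; ring).
    unfold rect_int.
    apply (rect_integral_le_linear_approx g (ra (rn n)) (rb (rn n)) (rc (rn n)) (rd (rn n)) (xs, ys) L e).
    - lra.
    - exact I2.
    - exact I5.
    - exact (holo_on_rect_sub g a b c d _ _ _ _ Hg I1 I3 I4 I6).
    - exact (Hxs n).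
    - exact (Hys n).
    - intros x y Hx Hy. apply HD.
      change ((x, y) - (xs, ys))%C with (((x - xs)%R, (y - ys)%R) : C).
      eapply Rle_lt_trans; [apply Cmod_le_Rabs_plus|].
      specialize (Hxs n). specialize (Hys n).
      assert (Rabs (x - xs) <= rb (rn n) - ra (rn n)) by (apply Rabs_le; lra).
      assert (Rabs (y - ys) <= rd (rn n) - rc (rn n)) by (apply Rabs_le; lra).
      rewrite I7 in *. rewrite I8 in *. unfold K in Hn. lra. }
  assert (Q : (/ 4) ^ n = t ^ 2).
  { unfold t. rewrite <- pow_mult. replace (/ 4) with ((/ 2) ^ 2) by field.
    rewrite <- pow_mult. f_equal. lia. }
  rewrite Q in I9. fold M in I9.
  assert (M <= 2 * e * K ^ 2).
  { apply (Rmult_le_reg_r (t ^ 2)); [apply pow_lt; exact Ht|].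
    replace (2 * e * K ^ 2 * t ^ 2) with (2 * e * (K * t) ^ 2) by ring. lra. }
  assert (2 * e * K ^ 2 < M).
  { unfold e. apply (Rmult_lt_reg_r (4 * K ^ 2 + 1)); [nra|].
    assert (0 <= K ^ 2) by apply pow2_ge_0.
    replace (2 * (M / (4 * K ^ 2 + 1)) * K ^ 2 * (4 * K ^ 2 + 1)) with (2 * M * K ^ 2) by (field; lra).
    assert (0 <= M * K ^ 2) by (apply Rmult_le_pos; lra). lra. }
  lra.
Qed.

End Goursat.

Section RemovablePoint.
Variables (g : C -> C) (s : R).
Hypothesis Hs : 0 < s.
Hypothesis Hg : forall x y, -s <= x <= s -> -s <= y <= s -> ((x, y) : C) <> 0%C -> ex_Cderive g (x, y).
Hypothesis Hsmall : forall eta, 0 < eta -> exists dl, 0 < dl /\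
  forall z : C, z <> 0%C -> Cmod z < dl -> Cmod (z * g z) <= eta.

Lemma ex_CRInt_punctured_horizontal y u v : y <> 0 -> -s <= u -> u <= v -> v <= s -> -s <= y <= s ->
  ex_CRInt (fun x => g (x, y)) u v.
Proof.
  intros Hy Hu Huv Hv Hys. apply ex_CRInt_horizontal; [exact Huv|]. intros x Hx.
  apply Hg; try lra. intros E. injection E. lra.
Qed.

Lemma ex_CRInt_punctured_vertical x u v : x <> 0 -> -s <= u -> u <= v -> v <= s -> -s <= x <= s ->
  ex_CRInt (fun y => g (x, y)) u v.
Proof.
  intros Hx Hu Huv Hv Hxs. apply ex_CRInt_vertical; [exact Huv|]. intros y Hy.
  apply Hg; try lra. intros E. injection E. lra.
Qed.

Lemma holo_on_rect_punctured a b c d : -s <= a -> b <= s -> -s <= c -> d <= s ->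
  (0 < a \/ b < 0 \/ 0 < c \/ d < 0) -> holo_on_rect g a b c d.
Proof. intros Ha Hb Hc Hd Hout x y Hx Hy. apply Hg; try lra. intros E. injection E. lra. Qed.

(* Goursat's theorem kills the four rectangles surrounding the small square. *)
Lemma rect_integral_punctured_shrink eps : 0 < eps < s ->
  rect_integral g (-s) s (-s) s = rect_integral g (-eps) eps (-eps) eps.
Proof.
  intros He.
  rewrite (rect_integral_split_x g (-s) (-eps) s (-s) s)
    by (apply ex_CRInt_punctured_horizontal; lra).
  rewrite (rect_integral_split_x g (-eps) eps s (-s) s)
    by (apply ex_CRInt_punctured_horizontal; lra).
  rewrite (goursat g (-s) (-eps) (-s) s), (goursat g eps s (-s) s)
    by (lra || apply holo_on_rect_punctured; lra).
  rewrite (rect_integral_split_y g (-eps) eps (-s) (-eps) s)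
    by (apply ex_CRInt_punctured_vertical; lra).
  rewrite (rect_integral_split_y g (-eps) eps (-eps) eps s)
    by (apply ex_CRInt_punctured_vertical; lra).
  rewrite (goursat g (-eps) eps (-s) (-eps)), (goursat g (-eps) eps eps s)
    by (lra || apply holo_on_rect_punctured; lra).
  ring.
Qed.

Theorem rect_integral_removable : rect_integral g (-s) s (-s) s = 0%C.
Proof.
  set (Q := Cmod (rect_integral g (-s) s (-s) s)).
  destruct (Req_dec Q 0) as [E|E]; [apply Cmod_eq_0; exact E|]. exfalso.
  assert (HQ : 0 < Q) by (pose proof (Cmod_ge_0 (rect_integral g (-s) s (-s) s)); unfold Q in *; lra).
  destruct (Hsmall (Q / 16)) as [dl [Hdl Hz]]; [lra|].
  set (eps := Rmin (s / 2) (dl / 4)).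
  assert (He : 0 < eps < s)
    by (unfold eps; split; [apply Rmin_glb_lt; lra | pose proof (Rmin_l (s / 2) (dl / 4)); lra]).
  assert (He2 : eps <= dl / 4) by apply Rmin_r.
  assert (Hbd : forall x y, (Rabs x = eps /\ Rabs y <= eps) \/ (Rabs y = eps /\ Rabs x <= eps) ->
            Cmod (g (x, y)) <= Q / 16 / eps).
  { intros x y Hxy.
    assert (Hm : eps <= Cmod (x, y))
      by (destruct Hxy as [[A _]|[A _]]; rewrite <- A; [apply Rabs_Re_le_Cmod | apply Rabs_Im_le_Cmod]).
    assert (HM : Cmod (x, y) < dl)
      by (eapply Rle_lt_trans; [apply Cmod_le_Rabs_plus | destruct Hxy as [[A B]|[A B]]; lra]).
    assert (Hn : ((x, y) : C) <> 0%C) by (intros F; rewrite F, Cmod_0 in Hm; lra).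
    specialize (Hz (x, y) Hn HM). rewrite Cmod_mult in Hz.
    apply (Rmult_le_reg_l eps); [lra|]. field_simplify; [|lra].
    eapply Rle_trans; [|exact Hz]. apply Rmult_le_compat_r; [apply Cmod_ge_0 | lra]. }
  assert (Hsq : Cmod (rect_integral g (-eps) eps (-eps) eps)
                <= 2 * (Q / 16 / eps) * (eps - - eps) + 2 * (Q / 16 / eps) * (eps - - eps)).
  { apply rect_integral_bound; try lra.
    - split; intros t Ht; split; apply Hg; try lra; intros F; injection F; lra.
    - split; intros t Ht; split; apply Hbd;
        [right | right | left | left]; split;
        try (apply Rabs_le; lra); [rewrite Rabs_left | rewrite Rabs_right | rewrite Rabs_left | rewrite Rabs_right]; lra. }
  rewrite <- rect_integral_punctured_shrink in Hsq by exact He. fold Q in Hsq.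
  replace (2 * (Q / 16 / eps) * (eps - - eps) + 2 * (Q / 16 / eps) * (eps - - eps)) with (Q / 2) in Hsq
    by (field; lra).
  lra.
Qed.

End RemovablePoint.

(** * Cauchy estimate and Schwarz lemma *)

Lemma Cmod_lt_1_of_square x y : -(1/2) <= x <= 1/2 -> -(1/2) <= y <= 1/2 -> Cmod (x, y) < 1.
Proof.
  intros Hx Hy. unfold Cmod; simpl.
  apply (Rlt_le_trans _ (sqrt 1)); [apply sqrt_lt_1_alt; nra | rewrite sqrt_1; lra].
Qed.

Lemma Cinv_square_boundary_ge t : -(1/2) <= t <= 1/2 ->
  1 <= snd (Cinv (t, -(1/2))) /\ 1 <= - snd (Cinv (t, 1/2)) /\
  1 <= fst (Cinv (1/2, t)) /\ 1 <= - fst (Cinv (-(1/2), t)).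
Proof.
  intros Ht.
  assert (Hq : 0 < t * t + 1/4) by nra.
  assert (Hk : 1 <= (1/2) / (t * t + 1/4)).
  { apply (Rmult_le_reg_r (t * t + 1/4)); [lra|].
    unfold Rdiv. rewrite Rmult_assoc, Rinv_l by lra. nra. }
  unfold Cinv; simpl.
  repeat split; match goal with |- 1 <= ?e => replace e with ((1/2) / (t * t + 1/4)) by (field; nra) end;
    exact Hk.
Qed.

Lemma on_square_boundary_nonzero :
  on_rect_boundary (fun z => z <> (RtoC 0)) (-(1/2)) (1/2) (-(1/2)) (1/2).
Proof. split; intros t Ht; split; intros E; injection E; lra. Qed.

(* The exact value is [2 * PI]; each side contributes at least its length [1]. *)
Lemma rect_integral_Cinv_Im_ge : 4 <= snd (rect_integral Cinv (-(1/2)) (1/2) (-(1/2)) (1/2)).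
Proof.
  assert (Hh : -(1/2) <= 1/2) by lra.
  assert (HB : on_rect_boundary (ex_Cderive Cinv) (-(1/2)) (1/2) (-(1/2)) (1/2)).
  { destruct on_square_boundary_nonzero as [Hh' Hv'].
    split; intros t Ht; [destruct (Hh' t Ht) | destruct (Hv' t Ht)]; split; apply ex_Cderive_inv; auto. }
  destruct (ex_CRInt_rect_boundary Cinv _ _ _ _ Hh Hh HB) as (J1 & J2 & J3 & J4).
  unfold rect_integral.
  assert (E : forall u v w t : C, snd (u + Ci * v - w - Ci * t)%C = snd u + fst v - snd w - fst t)
    by (intros [u1 u2] [v1 v2] [w1 w2] [t1 t2]; unfold Cplus, Cminus, Cmult, Copp, Ci; simpl; ring).
  rewrite E, (CRInt_snd _ _ _ J1), (CRInt_snd _ _ _ J2), (CRInt_fst _ _ _ J3), (CRInt_fst _ _ _ J4).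
  pose proof (@ex_RInt_fct_extend_snd R_NormedModule R_NormedModule _ _ _ J1) as K1.
  pose proof (@ex_RInt_fct_extend_snd R_NormedModule R_NormedModule _ _ _ J2) as K2.
  pose proof (@ex_RInt_fct_extend_fst R_NormedModule R_NormedModule _ _ _ J3) as K3.
  pose proof (@ex_RInt_fct_extend_fst R_NormedModule R_NormedModule _ _ _ J4) as K4.
  assert (L1 : 1 <= RInt (fun x => snd (Cinv (x, - (1/2)))) (-(1/2)) (1/2)).
  { eapply Rle_trans; [|apply RInt_ge_length; auto; intros; apply Cinv_square_boundary_ge; auto]. lra. }
  assert (L2 : 1 <= RInt (fun x => - snd (Cinv (x, 1/2))) (-(1/2)) (1/2)).
  { eapply Rle_trans; [|apply RInt_ge_length; auto; [apply (@ex_RInt_opp R_NormedModule); exact K2|];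
      intros; apply Cinv_square_boundary_ge; auto]. lra. }
  assert (L3 : 1 <= RInt (fun y => fst (Cinv (1/2, y))) (-(1/2)) (1/2)).
  { eapply Rle_trans; [|apply RInt_ge_length; auto; intros; apply Cinv_square_boundary_ge; auto]. lra. }
  assert (L4 : 1 <= RInt (fun y => - fst (Cinv (- (1/2), y))) (-(1/2)) (1/2)).
  { eapply Rle_trans; [|apply RInt_ge_length; auto; [apply (@ex_RInt_opp R_NormedModule); exact K4|];
      intros; apply Cinv_square_boundary_ge; auto]. lra. }
  rewrite (@RInt_opp R_CompleteNormedModule) in L2, L4 by assumption.
  change (opp ?x) with (- x) in L2, L4. lra.
Qed.

(* Integrate [f z / z^2] around the square of half-side [1/2]: it equals [a] times the
   integral of [1/z], since [(f z - a z) / z^2] has a removable singularity at [0]. *)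
Lemma cauchy_estimate (f : C -> C) (a : C) :
  (forall z, Cmod z < 1 -> ex_Cderive f z) -> (forall z, Cmod z < 1 -> Cmod (f z) < 1) ->
  f (RtoC 0) = (RtoC 0) -> @is_derive C_AbsRing C_NormedModule f (RtoC 0) a -> Cmod a <= 4.
Proof.
  intros Hf Hb H0 Ha.
  set (g := fun z => ((f z - a * z) * (/ z * / z))%C).
  set (F := fun z => (f z * (/ z * / z))%C).
  assert (Hh : -(1/2) <= 1/2) by lra.
  assert (Hg : forall x y, -(1/2) <= x <= 1/2 -> -(1/2) <= y <= 1/2 -> ((x, y) : C) <> (RtoC 0) ->
                 ex_Cderive g (x, y)).
  { intros x y Hx Hy Hn. unfold g.
    apply ex_Cderive_mult; [apply ex_Cderive_minus|apply ex_Cderive_mult; apply ex_Cderive_inv; auto].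
    - apply Hf, Cmod_lt_1_of_square; auto.
    - apply ex_Cderive_scal, ex_Cderive_id. }
  assert (Hg0 : rect_integral g (-(1/2)) (1/2) (-(1/2)) (1/2) = (RtoC 0)).
  { apply rect_integral_removable; [lra | exact Hg |].
    intros eta He. destruct (is_derive_C_approx f (RtoC 0) a Ha eta He) as [dl [Hdl HD]].
    exists dl. split; auto. intros z Hz Hzd.
    assert (Hm : 0 < Cmod z) by (apply Cmod_gt_0; auto).
    specialize (HD z). rewrite H0 in HD. replace (z - RtoC 0)%C with z in HD by ring. specialize (HD Hzd).
    unfold g. replace (z * ((f z - a * z) * (/ z * / z)))%C with ((f z - 0 - a * z) * / z)%C by (field; auto).
    rewrite Cmod_mult, Cmod_inv by auto.
    apply (Rmult_le_reg_r (Cmod z)); auto. rewrite Rmult_assoc, Rinv_l by lra. lra. }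
  destruct on_square_boundary_nonzero as [N1 N2].
  assert (HF : on_rect_boundary (ex_Cderive F) (-(1/2)) (1/2) (-(1/2)) (1/2)).
  { split; intros t Ht; [destruct (N1 t Ht) | destruct (N2 t Ht)]; split; unfold F;
      (apply ex_Cderive_mult; [apply Hf, Cmod_lt_1_of_square; lra | apply ex_Cderive_mult; apply ex_Cderive_inv; auto]). }
  assert (EF : rect_integral F (-(1/2)) (1/2) (-(1/2)) (1/2)
               = (a * rect_integral Cinv (-(1/2)) (1/2) (-(1/2)) (1/2))%C).
  { rewrite <- (Cplus_0_l (a * _)), <- Hg0, <- rect_integral_lin; auto.
    - apply rect_integral_ext; auto.
      split; intros t Ht; [destruct (N1 t Ht) | destruct (N2 t Ht)]; unfold F, g; split; field; auto.
    - split; intros t Ht; [destruct (N1 t Ht) | destruct (N2 t Ht)]; split; apply Hg; auto; lra.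
    - split; intros t Ht; [destruct (N1 t Ht) | destruct (N2 t Ht)]; split; apply ex_Cderive_inv; auto. }
  assert (HFb : on_rect_boundary (fun z => Cmod (F z) <= 4) (-(1/2)) (1/2) (-(1/2)) (1/2)).
  { assert (Hpt : forall x y, -(1/2) <= x <= 1/2 -> -(1/2) <= y <= 1/2 ->
                    (Rabs x = 1/2 \/ Rabs y = 1/2) -> Cmod (F (x, y)) <= 4).
    { intros x y Hx Hy Hxy. unfold F.
      assert (Hm : 1/2 <= Cmod (x, y))
        by (destruct Hxy as [A|A]; rewrite <- A; [apply Rabs_Re_le_Cmod | apply Rabs_Im_le_Cmod]).
      assert (Hn : ((x, y) : C) <> (RtoC 0)) by (intros Ez; rewrite Ez, Cmod_0 in Hm; lra).
      rewrite !Cmod_mult, Cmod_inv by auto.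
      assert (Cmod (f (x, y)) < 1) by (apply Hb, Cmod_lt_1_of_square; auto).
      assert (/ Cmod (x, y) <= 2)
        by (replace 2 with (/ (1/2)) by field; apply Rinv_le_contravar; lra).
      assert (0 <= / Cmod (x, y)) by (apply Rlt_le, Rinv_0_lt_compat; lra).
      pose proof (Cmod_ge_0 (f (x, y))). nra. }
    split; intros t Ht; split; apply Hpt; try lra;
      [right | right | left | left]; [rewrite Rabs_left | rewrite Rabs_right | rewrite Rabs_left | rewrite Rabs_right]; lra. }
  pose proof (rect_integral_bound F _ _ _ _ 4 Hh Hh HF HFb) as BF.
  rewrite EF, Cmod_mult in BF.
  assert (Hc : 4 <= Cmod (rect_integral Cinv (-(1/2)) (1/2) (-(1/2)) (1/2))).
  { pose proof rect_integral_Cinv_Im_ge as Him.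
    destruct (rect_integral Cinv (-(1/2)) (1/2) (-(1/2)) (1/2)) as [c1 c2]. simpl in Him.
    eapply Rle_trans; [|apply Rabs_Im_le_Cmod]. rewrite Rabs_right; lra. }
  pose proof (Cmod_ge_0 a). nra.
Qed.

(* The iterates [f^n] satisfy the same hypotheses and have derivative [a^n] at [0],
   so [|a|^n <= 4] for all [n]. *)
Theorem schwarz_derive (f : C -> C) (a : C) :
  (forall z, Cmod z < 1 -> ex_Cderive f z) -> (forall z, Cmod z < 1 -> Cmod (f z) < 1) ->
  f (RtoC 0) = (RtoC 0) -> @is_derive C_AbsRing C_NormedModule f (RtoC 0) a -> Cmod a <= 1.
Proof.
  intros Hf Hb H0 Ha.
  set (it := fun n (z : C) => Nat.iter n f z).
  assert (Ib : forall n z, Cmod z < 1 -> Cmod (it n z) < 1)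
    by (induction n; intros z Hz; simpl; auto).
  assert (I0 : forall n, it n (RtoC 0) = (RtoC 0))
    by (induction n; simpl; auto; change (f (it n (RtoC 0)) = (RtoC 0)); rewrite IHn; auto).
  assert (Id : forall n z, Cmod z < 1 -> ex_Cderive (it n) z).
  { induction n; intros z Hz; [apply ex_Cderive_id|].
    apply (ex_Cderive_comp f (it n) z); auto. }
  assert (Iv : forall n, @is_derive C_AbsRing C_NormedModule (it n) (RtoC 0) (a ^ n)%C).
  { induction n.
    - apply is_derive_C_exact. intros w. simpl. ring.
    - rewrite <- (I0 n) in Ha.
      pose proof (@is_derive_comp C_AbsRing C_NormedModule f (it n) (RtoC 0) a (a ^ n)%C Ha
                    (is_derive_C_AbsRing _ _ _ IHn)) as K.
      replace (a ^ S n)%C with (scal (a ^ n)%C a) by (simpl; unfold scal; simpl; unfold mult; simpl; ring).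
      exact K. }
  assert (B : forall n, Cmod a ^ n <= 4)
    by (intros n; rewrite <- Cmod_pow; apply (cauchy_estimate (it n)); auto).
  destruct (Rle_dec (Cmod a) 1) as [L|L]; auto. exfalso.
  destruct (INR_archimed (Cmod a - 1) 4) as [n Hn]; [lra|].
  pose proof (Rle_pow_lin (Cmod a - 1) n ltac:(lra)) as P.
  replace (1 + (Cmod a - 1)) with (Cmod a) in P by ring.
  specialize (B n). lra.
Qed.

(** * The Kobayashi-Royden metric of [G_psi] *)

Section Kobayashi.
Variable Omega : C * C -> Prop.

Lemma kobayashi_ge_Cmod_snd (p X : C * C) :
  (forall z, Omega z -> in_disc (snd z)) -> snd p = RtoC 0 ->
  Rbar_le (Cmod (snd X)) (kobayashi Omega p X).
Proof.
  intros HOmega Hp. unfold kobayashi.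
  match goal with |- Rbar_le _ (Glb_Rbar ?E) => destruct (Glb_Rbar_correct E) as [_ Hglb] end.
  apply Hglb. intros r [lam [Hlam [-> [phi [Hh [Hin [H0 [_ H2]]]]]]]].
  assert (S : Cmod (RtoC lam * snd X) <= 1).
  { apply (schwarz_derive (fun w => snd (phi w))); auto.
    - intros z Hz. apply (Hh z Hz).
    - intros z Hz. apply HOmega, Hin, Hz.
    - rewrite H0. exact Hp. }
  rewrite Cmod_mult, Cmod_R, Rabs_right in S by lra.
  simpl. apply (Rmult_le_reg_l lam); auto. rewrite Rinv_r by lra. lra.
Qed.

Lemma kobayashi_le_linear_disc (p X : C * C) lam : 0 < lam ->
  (forall w, in_disc w -> Omega ((fst p + RtoC lam * fst X * w)%C, (snd p + RtoC lam * snd X * w)%C)) ->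
  Rbar_le (kobayashi Omega p X) (/ lam).
Proof.
  intros Hlam HOmega. unfold kobayashi.
  match goal with |- Rbar_le (Glb_Rbar ?E) _ => destruct (Glb_Rbar_correct E) as [Hlb _] end.
  apply Hlb. exists lam. split; [exact Hlam|]. split; [reflexivity|].
  exists (fun w => ((fst p + RtoC lam * fst X * w)%C, (snd p + RtoC lam * snd X * w)%C)).
  split; [|split; [exact HOmega|split; [|split]]]; simpl.
  - intros z _. split; apply ex_Cderive_affine.
  - destruct p; simpl; f_equal; ring.
  - apply is_derive_C_exact. intros w. ring.
  - apply is_derive_C_exact. intros w. ring.
Qed.

Lemma kobayashi_zero_le (p : C * C) : Omega p -> Rbar_le (kobayashi Omega p (RtoC 0, RtoC 0)) 0.
Proof.
  intros Hp.
  assert (H : forall lam, 0 < lam -> Rbar_le (kobayashi Omega p (RtoC 0, RtoC 0)) (/ lam)).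
  { intros lam Hlam. apply kobayashi_le_linear_disc; auto. intros w _.
    replace ((fst p + RtoC lam * fst (RtoC 0, RtoC 0) * w)%C, (snd p + RtoC lam * snd (RtoC 0, RtoC 0) * w)%C)
      with p by (destruct p; simpl; f_equal; ring).
    exact Hp. }
  destruct (kobayashi Omega p (RtoC 0, RtoC 0)) as [k| |]; simpl; auto.
  - destruct (Rle_dec k 0) as [L|L]; auto. exfalso.
    specialize (H (2 / k) ltac:(apply Rdiv_lt_0_compat; lra)). simpl in H.
    replace (/ (2 / k)) with (k / 2) in H by (field; lra). lra.
  - exact (H 1 ltac:(lra)).
Qed.

End Kobayashi.

Lemma kobayashi_G_psi_le psi delta xN xT B : 0 < delta < 1 -> 0 < B ->
  Cmod xN <= (1 - delta) * B -> Cmod xT <= B ->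
  (forall s, 0 <= s < 1 -> - delta + Cmod xN / B * s < psi (Cmod xT / B * s)) ->
  Rbar_le (kobayashi (G_psi psi) (p_delta delta) (xN, xT)) B.
Proof.
  intros Hd HB HN HT Hpsi.
  rewrite <- (Rinv_inv B).
  apply kobayashi_le_linear_disc; [apply Rinv_0_lt_compat; lra|].
  intros w Hw. unfold in_disc in Hw. unfold G_psi, in_disc, p_delta. simpl.
  pose proof (Cmod_ge_0 w) as Hw0. pose proof (Cmod_ge_0 xN). pose proof (Cmod_ge_0 xT).
  assert (EN : Cmod (RtoC (/ B) * xN * w) = Cmod xN / B * Cmod w).
  { rewrite !Cmod_mult, Cmod_R, Rabs_right by (apply Rle_ge, Rlt_le, Rinv_0_lt_compat; lra).
    unfold Rdiv. ring. }
  assert (ET : Cmod (RtoC 0 + RtoC (/ B) * xT * w) = Cmod xT / B * Cmod w).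
  { rewrite Cplus_0_l, !Cmod_mult, Cmod_R, Rabs_right by (apply Rle_ge, Rlt_le, Rinv_0_lt_compat; lra).
    unfold Rdiv. ring. }
  assert (HN' : Cmod xN / B <= 1 - delta)
    by (apply (Rmult_le_reg_r B); [lra|]; unfold Rdiv; rewrite Rmult_assoc, Rinv_l; lra).
  assert (HT' : Cmod xT / B <= 1)
    by (apply (Rmult_le_reg_r B); [lra|]; unfold Rdiv; rewrite Rmult_assoc, Rinv_l; lra).
  assert (HNw : Cmod xN / B * Cmod w <= (1 - delta) * Cmod w) by (apply Rmult_le_compat_r; lra).
  split; [|split].
  - eapply Rle_lt_trans; [apply Cmod_triangle|].
    rewrite Cmod_R, EN, Rabs_left by lra. nra.
  - rewrite ET. assert (Cmod xT / B * Cmod w <= 1 * Cmod w) by (apply Rmult_le_compat_r; lra). lra.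
  - rewrite ET. specialize (Hpsi (Cmod w) (conj Hw0 Hw)).
    pose proof (re_le_Cmod (RtoC (/ B) * xN * w)%C) as Hre. rewrite EN in Hre.
    apply Rabs_le_between in Hre. simpl in Hre. lra.
Qed.

Lemma kobayashi_G_psi_zero_le psi delta : psi_admissible psi -> 0 < delta < 1 ->
  Rbar_le (kobayashi (G_psi psi) (p_delta delta) (RtoC 0, RtoC 0)) 0.
Proof.
  intros (_ & _ & H0 & _) Hd. apply kobayashi_zero_le.
  unfold G_psi, p_delta, in_disc; simpl. rewrite Cmod_R, Cmod_0, H0, Rabs_left by lra. lra.
Qed.

Lemma kobayashi_G_psi_ge psi delta xN xT :
  Rbar_le (Cmod xT) (kobayashi (G_psi psi) (p_delta delta) (xN, xT)).
Proof. apply (kobayashi_ge_Cmod_snd _ _ (xN, xT)); [intros z Hz; apply Hz | reflexivity]. Qed.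

Lemma kobayashi_G_psi_le_of_linear_minorant psi c0 delta xN xT :
  psi_admissible psi -> (forall x, 0 <= x <= 1 -> c0 * x <= psi x) ->
  Cmod xN <= Rmin 1 c0 * Cmod xT -> 0 < delta < 1 ->
  Rbar_le (kobayashi (G_psi psi) (p_delta delta) (xN, xT))
          (Rmax 1 (Cmod xN / Cmod xT * (1 / (1 - delta))) * Cmod xT).
Proof.
  intros Hadm Hpsi HxN Hd.
  pose proof (Cmod_ge_0 xN) as GN. pose proof (Cmod_ge_0 xT) as GT.
  assert (Hc0 : Cmod xN <= c0 * Cmod xT) by (pose proof (Rmin_r 1 c0); nra).
  destruct (Req_dec (Cmod xT) 0) as [Z|Z].
  { assert (ZN : Cmod xN = 0) by (rewrite Z in HxN; pose proof (Rmin_l 1 c0); nra).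
    rewrite Z, Rmult_0_r. apply Cmod_eq_0 in Z. apply Cmod_eq_0 in ZN. subst xN xT.
    apply kobayashi_G_psi_zero_le; auto. }
  set (B := Rmax 1 (Cmod xN / Cmod xT * (1 / (1 - delta))) * Cmod xT).
  assert (B1 : Cmod xT <= B) by (unfold B; pose proof (Rmax_l 1 (Cmod xN / Cmod xT * (1 / (1 - delta)))); nra).
  assert (B2 : Cmod xN <= (1 - delta) * B).
  { unfold B. pose proof (Rmax_r 1 (Cmod xN / Cmod xT * (1 / (1 - delta)))) as M.
    apply (Rmult_le_compat_r (Cmod xT)) in M; [|lra].
    replace (Cmod xN / Cmod xT * (1 / (1 - delta)) * Cmod xT) with (Cmod xN / (1 - delta)) in M by (field; lra).
    apply (Rmult_le_compat_l (1 - delta)) in M; [|lra].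
    replace ((1 - delta) * (Cmod xN / (1 - delta))) with (Cmod xN) in M by (field; lra). lra. }
  apply kobayashi_G_psi_le; try lra.
  intros s Hs.
  assert (Ht : 0 <= Cmod xT / B * s < 1).
  { assert (0 <= Cmod xT / B <= 1)
      by (split; [apply Rdiv_le_0_compat | apply (Rmult_le_reg_r B); [|unfold Rdiv; rewrite Rmult_assoc, Rinv_l]]; lra).
    nra. }
  specialize (Hpsi _ (conj (proj1 Ht) (Rlt_le _ _ (proj2 Ht)))).
  assert (Cmod xN / B * s <= c0 * (Cmod xT / B * s)).
  { unfold Rdiv. assert (0 <= / B * s) by (apply Rmult_le_pos; [apply Rlt_le, Rinv_0_lt_compat|]; lra). nra. }
  lra.
Qed.

Section StrictlyIncreasingRatio.
Variable psi : R -> R.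
Hypothesis Hadm : psi_admissible psi.
Hypothesis Hmono : forall x y, 0 < x -> x < y -> y < 1 -> psi x / x < psi y / y.

Lemma psi_ratio_le_psi_1 y : 0 < y < 1 -> psi y / y <= psi 1.
Proof.
  intros Hy. destruct Hadm as (_ & Hcont & _).
  destruct (Rle_dec (psi y / y) (psi 1)) as [L|L]; auto. exfalso.
  set (h := psi y / y) in *.
  set (eps := (h - psi 1) / 2).
  assert (He : 0 < eps) by (unfold eps; lra).
  destruct (Hcont 1 ltac:(lra) eps He) as [d [Hdp Hd1]].
  (* choose x in (y, 1) so close to 1 that x * h exceeds psi 1 + eps while psi x stays below it *)
  set (x := Rmax (Rmax ((1 + y) / 2) (1 - d / 2)) ((h + psi 1) / (2 * h))).
  assert (Hh : 0 < h) by (pose proof (proj1 Hadm 1 ltac:(lra)); lra).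
  assert (Q : (h + psi 1) / (2 * h) < 1)
    by (apply (Rmult_lt_reg_r (2 * h)); [lra|]; unfold Rdiv; rewrite Rmult_assoc, Rinv_l; lra).
  assert (Hx1 : y < x) by (unfold x; eapply Rlt_le_trans; [|apply Rmax_l]; eapply Rlt_le_trans; [|apply Rmax_l]; lra).
  assert (Hx2 : x < 1) by (unfold x; apply Rmax_lub_lt; [apply Rmax_lub_lt|]; lra).
  assert (Hx3 : 1 - d / 2 <= x) by (unfold x; eapply Rle_trans; [|apply Rmax_l]; apply Rmax_r).
  assert (Hx4 : (h + psi 1) / (2 * h) <= x) by (unfold x; apply Rmax_r).
  assert (Hxh : psi 1 + eps <= x * h).
  { apply (Rmult_le_compat_r h) in Hx4; [|lra].
    replace ((h + psi 1) / (2 * h) * h) with ((h + psi 1) / 2) in Hx4 by (field; lra). unfold eps. lra. }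
  assert (Px : x * h < psi x).
  { specialize (Hmono y x ltac:(lra) Hx1 Hx2). fold h in Hmono.
    apply (Rmult_lt_compat_l x) in Hmono; [|lra].
    replace (x * (psi x / x)) with (psi x) in Hmono by (field; lra). lra. }
  specialize (Hd1 x ltac:(lra)). rewrite Rabs_left in Hd1 by lra. specialize (Hd1 ltac:(lra)).
  apply Rabs_def2 in Hd1. lra.
Qed.

Lemma psi_ratio_le x y : 0 < x -> x <= y -> y <= 1 -> psi x / x <= psi y / y.
Proof.
  intros Hx Hxy Hy.
  destruct (Req_dec x y) as [->|Nxy]; [lra|].
  destruct (Req_dec y 1) as [->|Ny1].
  - rewrite Rdiv_1_r. apply psi_ratio_le_psi_1. lra.
  - apply Rlt_le, Hmono; lra.
Qed.

Lemma psi_lt x y : 0 < x -> x < y -> y < 1 -> psi x < psi y.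
Proof.
  intros Hx Hxy Hy. specialize (Hmono x y Hx Hxy Hy).
  assert (0 <= psi x / x) by (apply Rdiv_le_0_compat; [apply (proj1 Hadm) | ]; lra).
  replace (psi x) with (x * (psi x / x)) by (field; lra).
  replace (psi y) with (y * (psi y / y)) by (field; lra). nra.
Qed.

(* If [y <= ystar], monotonicity of [psi x / x] gives [delta / y <= dstar / ystar = 1 - dstar];
   [y > ystar] would force [delta > dstar]. *)
Lemma ratio_le_one_minus dstar ystar delta y :
  0 < ystar <= 1 -> psi ystar = dstar -> 1 - dstar = dstar / ystar ->
  delta <= dstar -> 0 < y <= 1 -> psi y = delta -> delta / y <= 1 - delta.
Proof.
  intros Hys Hpys Heq Hdd Hy Hpy.
  assert (Dpos : 0 <= dstar) by (rewrite <- Hpys; apply (proj1 Hadm); lra).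
  assert (Dhalf : dstar <= 1 - dstar).
  { rewrite Heq. apply (Rmult_le_reg_r ystar); [lra|].
    unfold Rdiv. rewrite Rmult_assoc, Rinv_l by lra. nra. }
  destruct (Rle_dec y ystar) as [L|L].
  - rewrite <- Hpy. apply (Rle_trans _ (psi ystar / ystar)); [apply psi_ratio_le; lra|]. rewrite Hpys, <- Heq. lra.
  - destruct (Req_dec y 1) as [->|Ny1]; [rewrite Rdiv_1_r; lra|].
    pose proof (psi_lt ystar y ltac:(lra) ltac:(lra) ltac:(lra)). lra.
Qed.

Lemma psi_above_line delta y r : 0 < delta -> 0 < y <= 1 -> psi y = delta -> 0 <= r <= delta / y ->
  forall s, 0 <= s < 1 -> - delta + r * s < psi s.
Proof.
  intros Hd Hy Hpy Hr s Hs.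
  assert (Hrs : r * s <= delta / y * s) by (apply Rmult_le_compat_r; lra).
  destruct (Rlt_le_dec y s) as [L|L].
  - specialize (Hmono y s ltac:(lra) L ltac:(lra)). rewrite Hpy in Hmono.
    apply (Rmult_lt_compat_r s) in Hmono; [|lra].
    replace (psi s / s * s) with (psi s) in Hmono by (field; lra). lra.
  - assert (delta / y * s <= delta)
      by (apply (Rmult_le_reg_r y); [lra|]; replace (delta / y * s * y) with (delta * s) by (field; lra); nra).
    destruct (Req_dec s 0) as [->|Ns].
    + rewrite Rmult_0_r. rewrite (proj1 (proj2 (proj2 Hadm))). lra.
    + destruct (Req_dec s y) as [->|Nsy]; [lra|].
      pose proof (proj1 Hadm s ltac:(lra)).
      assert (delta / y * s < delta)
        by (apply (Rmult_lt_reg_r y); [lra|]; replace (delta / y * s * y) with (delta * s) by (field; lra); nra).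
      lra.
Qed.

Lemma kobayashi_G_psi_le_Cmod_snd dstar ystar delta y xN xT :
  0 < ystar <= 1 -> psi ystar = dstar -> 1 - dstar = dstar / ystar ->
  0 < delta < 1 -> delta <= dstar -> 0 < y <= 1 -> psi y = delta ->
  Cmod xN <= Rmin 1 (delta / y) * Cmod xT ->
  Rbar_le (kobayashi (G_psi psi) (p_delta delta) (xN, xT)) (Cmod xT).
Proof.
  intros Hys Hpys Heq Hd Hdd Hy Hpy HxN.
  pose proof (Cmod_ge_0 xN) as GN. pose proof (Cmod_ge_0 xT) as GT.
  assert (Hdy : 0 < delta / y) by (apply Rdiv_lt_0_compat; lra).
  assert (HxN' : Cmod xN <= delta / y * Cmod xT) by (pose proof (Rmin_r 1 (delta / y)); nra).
  destruct (Req_dec (Cmod xT) 0) as [Z|Z].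
  { assert (ZN : Cmod xN = 0) by (rewrite Z in HxN'; nra).
    rewrite Z. apply Cmod_eq_0 in Z. apply Cmod_eq_0 in ZN. subst xN xT.
    apply kobayashi_G_psi_zero_le; auto. }
  pose proof (ratio_le_one_minus dstar ystar delta y Hys Hpys Heq Hdd Hy Hpy) as Hratio.
  assert (Hr : 0 <= Cmod xN / Cmod xT <= delta / y).
  { split; [apply Rdiv_le_0_compat; lra|].
    apply (Rmult_le_reg_r (Cmod xT)); [lra|]. unfold Rdiv. rewrite Rmult_assoc, Rinv_l by lra. lra. }
  apply kobayashi_G_psi_le; try lra.
  - apply (Rle_trans _ (delta / y * Cmod xT)); [lra | apply Rmult_le_compat_r; lra].
  - intros s Hs. replace (Cmod xT / Cmod xT * s) with s by (field; lra).
    apply (psi_above_line delta y); auto; lra.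
Qed.

End StrictlyIncreasingRatio.

Theorem proposition2 (psi : R -> R) (delta0 : R) :
  psi_admissible psi -> delta0 < 1 ->
  (* (1) *)
  (forall c0 : R, 0 < c0 -> (forall x, 0 <= x <= 1 -> c0 * x <= psi x) ->
   forall xN xT : C, Cmod xN <= Rmin 1 c0 * Cmod xT ->
   forall delta : R, 0 < delta <= delta0 ->
     Rbar_le (Finite (Cmod xT)) (kobayashi (G_psi psi) (p_delta delta) (xN, xT)) /\
     Rbar_le (kobayashi (G_psi psi) (p_delta delta) (xN, xT))
       (Finite (Rmax 1 (Cmod xN / Cmod xT * (1 / (1 - delta))) * Cmod xT)))
  /\
  (* (2) *)
  ((forall x y, 0 < x -> x < y -> y < 1 -> psi x / x < psi y / y) ->
   forall dstar : R,
     (* dstar solves 1 - d = d / psi^{-1}(d) ... *)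
     (exists ystar, 0 < ystar <= 1 /\ psi ystar = dstar /\ 1 - dstar = dstar / ystar) ->
     (* ... and is the unique solution *)
     (forall d y, 0 < y <= 1 -> psi y = d -> 1 - d = d / y -> d = dstar) ->
   forall delta : R, 0 < delta <= delta0 -> delta <= dstar ->
   forall y : R, 0 < y <= 1 -> psi y = delta -> (* y = psi^{-1}(delta) *)
   forall xN xT : C, Cmod xN <= Rmin 1 (delta / y) * Cmod xT ->
     kobayashi (G_psi psi) (p_delta delta) (xN, xT) = Finite (Cmod xT)).
Proof.
  intros Hadm Hd0. split.
  - intros c0 _ Hpsi xN xT HxN delta Hd. split.
    + apply kobayashi_G_psi_ge.
    + apply (kobayashi_G_psi_le_of_linear_minorant psi c0); auto; lra.
  - intros Hmono dstar [ystar (Hys & Hpys & Heq)] _ delta Hd Hdd y Hy Hpy xN xT HxN.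
    apply Rbar_le_antisym.
    + apply (kobayashi_G_psi_le_Cmod_snd psi Hadm Hmono dstar ystar delta y); auto; lra.
    + apply kobayashi_G_psi_ge.
Qed.
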